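(* For every $d\ge 1$, every hierarchical hub labeling of the $d$-dimensional hypercube $Q_d$ has size at least $3^d$. Consequently, the minimum size of a hierarchical hub labeling of $Q_d$ is exactly $3^d$. *)

From HB Require Import structures.
From mathcomp Require Import all_boot.
Set Implicit Arguments. Unset Strict Implicit. Unset Printing Implicit Defensive.

(* A walk of length k from u to v: a sequence p of k further vertices,
   consecutive ones adjacent, ending at v. *)
Definition walk {T : finType} (e : rel T) (u v : T) (k : nat) : Prop :=
  exists p : seq T, [/\ path e u p, last u p = v & size p = k].

Definition is_dist {T : finType} (e : rel T) (u v : T) (k : nat) : Prop :=
  walk e u v k /\ forall m, walk e u v m -> k <= m.

Definition on_shortest_path {T : finType} (e : rel T) (u w v : T) : Prop :=
  exists k1 k2, [/\ is_dist e u w k1, is_dist e w v k2 & is_dist e u v (k1 + k2)].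

(* Hub labeling: every pair u, v (in the same component) has a common hub
   lying on a shortest u-v path. (Q_d is connected.) *)
Definition hub_labeling {T : finType} (e : rel T) (H : T -> {set T}) : Prop :=
  forall u v : T, (exists k, is_dist e u v k) ->
    exists2 w, w \in H u :&: H v & on_shortest_path e u w v.

(* Hierarchical: there is a total order on vertices (an injective rank)
   such that every hub of v is ranked at least as high as v. *)
Definition hierarchical {T : finType} (H : T -> {set T}) : Prop :=
  exists rank : T -> nat, injective rank /\
    forall v w : T, w \in H v -> rank v <= rank w.

Definition hierarchical_hub_labeling {T : finType} (e : rel T)
  (H : T -> {set T}) : Prop := hub_labeling e H /\ hierarchical H.

Definition labeling_size {T : finType} (H : T -> {set T}) : nat :=
  \sum_(v : T) #|H v|.

Definition hypercube_vertex (d : nat) := {ffun 'I_d -> bool}.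
Definition hypercube_adj (d : nat) : rel (hypercube_vertex d) :=
  fun x y => #|[set i : 'I_d | x i != y i]| == 1.

From HB Require Import structures.
From mathcomp Require Import all_boot.
From mathcomp Require Import zify.
Set Implicit Arguments. Unset Strict Implicit. Unset Printing Implicit Defensive.

(* Q_d has 3^d subcubes, coded by c : 'I_d -> 'I_3 (coordinate
   i is free when c i = 2 and fixed to c i otherwise).  A subcube is
   geodesically convex: every shortest path between two of its vertices stays
   inside it.  In any hierarchical hub labeling, the highest-ranked vertex m
   of a convex set S is a hub of every vertex of S: the common hub of a and m
   lies in S, has rank at least rank m, hence is m.  Taking for a the
   antipode of m inside the subcube gives a hub pair (a, m) from which the
   subcube can be read back, so there are at least 3^d hub pairs.

   Labeling each u by all coordinatewise supersets w >= u is
   hierarchical (rank by number of ones), u OR v is a common hub on a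
   shortest u-v path, and the pairs u <= w are again coded by 'I_d -> 'I_3. *)

Lemma labeling_size_pairs (T : finType) (H : T -> {set T}) :
  labeling_size H = #|[set p : T * T | p.2 \in H p.1]|.
Proof.
rewrite /labeling_size (eq_bigr (fun u => \sum_w nat_of_bool (w \in H u))).
  rewrite pair_big /= -sum1_card [RHS]big_mkcond /=.
  by apply: eq_bigr => p _; rewrite inE.
by move=> u _; rewrite -sum1_card big_mkcond.
Qed.

(* A labeling whose hubs strictly increase a grading g is hierarchical:
   refine g to an injective rank by breaking ties with enum_rank. *)
Lemma hierarchical_of_grading (T : finType) (H : T -> {set T}) (g : T -> nat) :
  (forall v w, w \in H v -> w != v -> g v < g w) -> hierarchical H.
Proof.
move=> g_hub; exists (fun x => g x * #|T| + enum_rank x); split.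
  move=> x y /(congr1 (modn ^~ #|T|)).
  by rewrite !modnMDl !modn_small ?ltn_ord // => /val_inj/enum_rank_inj.
move=> v w w_hub; have [-> //|w_neq_v] := eqVneq w v.
have lt_g := g_hub v w w_hub w_neq_v.
apply: leq_trans (leq_addr _ _); apply: leq_trans (_ : (g v).+1 * #|T| <= _).
  by rewrite mulSnr leq_add2l ltnW.
exact: leq_mul lt_g (leqnn _).
Qed.

Section HierarchicalHubs.
Variables (T : finType) (e : rel T) (H : T -> {set T}).

Definition geodesically_convex (S : {set T}) : Prop :=
  forall u w v, u \in S -> v \in S -> on_shortest_path e u w v -> w \in S.

Lemma top_vertex_is_hub (rank : T -> nat) (S : {set T}) (a m : T) :
  hub_labeling e H -> injective rank ->
  (forall v w, w \in H v -> rank v <= rank w) ->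
  geodesically_convex S -> a \in S -> m \in S ->
  (forall x, x \in S -> rank x <= rank m) ->
  (exists k, is_dist e a m k) -> m \in H a.
Proof.
move=> hub rank_inj rank_hub convS aS mS m_top conn.
have [w] := hub a m conn; rewrite inE => /andP[w_hub_a w_hub_m] w_sp.
have wS : w \in S := convS a w m aS mS w_sp.
suff -> : m = w by [].
by apply: rank_inj; apply/eqP; rewrite eqn_leq rank_hub // m_top.
Qed.

End HierarchicalHubs.

Section Hypercube.
Variable d : nat.
Local Notation T := (hypercube_vertex d).
Local Notation adj := (@hypercube_adj d).

Definition ham (x y : T) : nat := #|[set i : 'I_d | x i != y i]|.

Lemma hamE (x y : T) : ham x y = \sum_i (x i != y i).
Proof. by rewrite /ham -sum1_card big_mkcond /=; apply: eq_bigr => i _; rewrite inE. Qed.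

Lemma ham_detour (u w v : T) :
  ham u w + ham w v = ham u v + (\sum_i ((u i == v i) && (w i != u i))) * 2.
Proof.
rewrite !hamE -big_split big_distrl -big_split /=.
by apply: eq_bigr => i _; case: (u i); case: (w i); case: (v i).
Qed.

Lemma ham_triangle (u w v : T) : ham u v <= ham u w + ham w v.
Proof. by rewrite ham_detour leq_addr. Qed.

Lemma walk_ham_le (u v : T) (k : nat) : walk adj u v k -> ham u v <= k.
Proof.
case=> p [+ + <-]; elim: p u => [|x p IH] u /=.
  by move=> _ <-; rewrite hamE big1 // => i _; rewrite eqxx.
move=> /andP[/eqP ux_adj x_path] last_v.
by apply: leq_trans (ham_triangle u x v) _; rewrite [ham u x]ux_adj ltnS IH.
Qed.

(* Flipping one disagreeing coordinate at a time gives a walk of length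
   exactly the Hamming distance. *)
Lemma walk_of_ham (u v : T) : walk adj u v (ham u v).
Proof.
suff: forall n u, ham u v = n -> walk adj u v n by apply.
elim=> [|n IH] {}u ham_uv.
  suff -> : u = v by exists [::].
  apply/ffunP=> i; apply/eqP; apply: contraT=> neq.
  by move/eqP: ham_uv; rewrite cards_eq0 => /eqP/setP/(_ i); rewrite !inE neq.
have /set0Pn[i] : [set j | u j != v j] != set0 by rewrite -card_gt0 -/(ham u v) ham_uv.
rewrite inE => uv_i.
pose x : T := [ffun j => if j == i then ~~ u i else u j].
have diffs_x : [set j | x j != v j] = [set j | u j != v j] :\ i.
  apply/setP=> j; rewrite !inE !ffunE; move: uv_i.
  by case: (j =P i) => [->|_]; case: (u i); case: (v i).
have [|p [x_path last_v size_p]] := IH x.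
  by move: ham_uv; rewrite /ham diffs_x (cardsD1 i [set j | u j != v j]) inE uv_i add1n => -[].
exists (x :: p); split => //=; last by rewrite size_p.
rewrite x_path andbT /hypercube_adj (_ : [set j | u j != x j] = [set i]) ?cards1 //.
apply/setP=> j; rewrite !inE !ffunE.
by case: (j =P i) => [->|_]; rewrite ?eqxx //; case: (u i).
Qed.

Lemma is_distE (u v : T) (k : nat) : is_dist adj u v k <-> k = ham u v.
Proof.
split=> [[walk_k k_min]|->].
  by apply/eqP; rewrite eqn_leq k_min ?walk_ham_le //; exact: walk_of_ham.
by split=> [|m /walk_ham_le]; first exact: walk_of_ham.
Qed.

Lemma on_shortest_pathE (u w v : T) :
  on_shortest_path adj u w v <-> forall i, u i = v i -> w i = u i.
Proof.
have no_detour : (forall i, u i = v i -> w i = u i) <->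
                 \sum_i ((u i == v i) && (w i != u i)) = 0.
  split=> [agree|/eqP].
    by rewrite big1 // => i _; case: eqP => // /agree ->; rewrite eqxx.
  rewrite sum_nat_eq0 => /forallP agree i uv_i.
  by have := agree i; rewrite uv_i eqxx /=; case: (w i); case: (v i).
rewrite no_detour; split.
  case=> k1 [k2 [/is_distE-> /is_distE-> /is_distE]].
  by rewrite ham_detour; lia.
move=> detours; exists (ham u w), (ham w v).
by split; apply/is_distE; rewrite // ham_detour detours addn0.
Qed.

Definition code := {ffun 'I_d -> 'I_3}.

Definition free (c : code) (i : 'I_d) : bool := c i == 2 :> nat.

Definition subcube (c : code) : {set T} :=
  [set x : T | [forall i, free c i || (x i == (c i == 1 :> nat))]].

Lemma subcube_convex (c : code) : geodesically_convex adj (subcube c).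
Proof.
move=> u w v; rewrite !inE => /forallP uC /forallP vC /on_shortest_pathE w_sp.
apply/forallP=> i; have := uC i; have := vC i.
case: (free c i) => //= /eqP v_i /eqP u_i.
by rewrite w_sp u_i ?v_i.
Qed.

Definition base_vertex (c : code) : T := [ffun i => c i == 1 :> nat].

Lemma base_vertex_in (c : code) : base_vertex c \in subcube c.
Proof. by rewrite inE; apply/forallP=> i; rewrite ffunE eqxx orbT. Qed.

Definition antipode (c : code) (x : T) : T :=
  [ffun i => if free c i then ~~ x i else x i].

Lemma antipode_in (c : code) (x : T) : x \in subcube c -> antipode c x \in subcube c.
Proof.
rewrite !inE => /forallP xC; apply/forallP=> i; rewrite ffunE.
by have := xC i; case: (free c i).
Qed.

Lemma code_of_antipode (c : code) (x : T) (i : 'I_d) : x \in subcube c ->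
  val (c i) = if antipode c x i != x i then 2 else nat_of_bool (x i).
Proof.
rewrite inE ffunE /free => /forallP/(_ i).
case: (c i) => /= [[|[|[|n]]] lt_n3] //=; by case: (x i).
Qed.

Lemma card_code : #|{: code}| = 3 ^ d.
Proof. by rewrite card_ffun !card_ord. Qed.

(* Lower bound: each subcube c yields the hub pair (antipode of top, top),
   where top is its highest-ranked vertex, and c is recovered from it. *)
Lemma hhl_lower_bound (H : T -> {set T}) :
  hierarchical_hub_labeling adj H -> 3 ^ d <= labeling_size H.
Proof.
move=> [hub [rank [rank_inj rank_hub]]].
pose top (c : code) := [arg max_(x > base_vertex c in subcube c) rank x].
have topP c : top c \in subcube c /\ forall x, x \in subcube c -> rank x <= rank (top c).
  by rewrite /top; case: (arg_maxnP rank (base_vertex_in c)) => m mC m_max; split.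
pose hub_pair (c : code) : T * T := (antipode c (top c), top c).
have pair_inj : injective hub_pair.
  move=> c c' [eq_a eq_m]; apply/ffunP => i; apply/val_inj.
  rewrite (code_of_antipode i (proj1 (topP c))).
  by rewrite eq_a eq_m -(code_of_antipode i (proj1 (topP c'))).
have pair_hub c : (hub_pair c).2 \in H (hub_pair c).1.
  have [topC top_max] := topP c.
  apply: (top_vertex_is_hub hub rank_inj rank_hub (@subcube_convex c) _ topC top_max).
    exact: antipode_in topC.
  by exists (ham (antipode c (top c)) (top c)); apply/is_distE.
rewrite labeling_size_pairs -card_code -cardsT -(card_imset _ pair_inj).
by apply: subset_leq_card; apply/subsetP => p /imsetP[c _ ->]; rewrite inE pair_hub.
Qed.

Definition superset_labeling (u : T) : {set T} := [set w : T | [forall i, u i ==> w i]].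

Definition weight (x : T) : nat := #|[set i : 'I_d | x i]|.

Lemma superset_labeling_hub : hub_labeling adj superset_labeling.
Proof.
move=> u v _; exists ([ffun i => u i || v i] : T).
  rewrite !inE; apply/andP; split; apply/forallP=> i; rewrite ffunE;
    by case: (u i); case: (v i).
by apply/on_shortest_pathE => i; rewrite ffunE => ->; rewrite orbb.
Qed.

(* Proper supersets have strictly larger weight. *)
Lemma superset_labeling_hierarchical : hierarchical superset_labeling.
Proof.
apply: (hierarchical_of_grading (g := weight)) => v w; rewrite inE => /forallP vw w_neq_v.
apply: proper_card; rewrite properEneq; apply/andP; split.
  apply: contra w_neq_v => /eqP/setP eq_vw; apply/eqP/ffunP=> i.
  by have := eq_vw i; rewrite !inE => ->.
by apply/subsetP => i; rewrite !inE; exact: implyP (vw i).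
Qed.

(* Pairs u <= w correspond to codes: c i = u i + w i. *)
Lemma superset_labeling_size : labeling_size superset_labeling = 3 ^ d.
Proof.
pose pair_of (c : code) : T * T := ([ffun i => 2 <= c i], [ffun i => 1 <= c i]).
have pair_inj : injective pair_of.
  move=> c c' [/ffunP eq_u /ffunP eq_w]; apply/ffunP=> i; apply/val_inj.
  move: (eq_u i) (eq_w i); rewrite !ffunE.
  case: (c i) (c' i) => [[|[|[|n]]] ?] [[|[|[|n']]] ?] //.
rewrite labeling_size_pairs.
have -> : [set p : T * T | p.2 \in superset_labeling p.1] = pair_of @: setT.
  apply/setP => [[u w]]; rewrite !inE /=; apply/idP/imsetP.
    move=> /forallP uw; exists [ffun i => inord (u i + w i)] => //.
    congr (_, _); apply/ffunP => i; rewrite !ffunE inordK;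
      by move: (uw i); case: (u i); case: (w i).
  case=> c _ [-> ->]; apply/forallP=> i; rewrite !ffunE; apply/implyP.
  exact: leq_trans.
by rewrite card_imset // cardsT card_code.
Qed.

End Hypercube.

Theorem mainTheorem3 (d : nat) (hd : 1 <= d) :
  (forall H : hypercube_vertex d -> {set hypercube_vertex d},
      hierarchical_hub_labeling (@hypercube_adj d) H -> 3 ^ d <= labeling_size H)
  /\ (exists H : hypercube_vertex d -> {set hypercube_vertex d},
      hierarchical_hub_labeling (@hypercube_adj d) H /\ labeling_size H = 3 ^ d).
Proof.
split; first exact: hhl_lower_bound.
exists (@superset_labeling d); split; last exact: superset_labeling_size.
split; [exact: superset_labeling_hub | exact: superset_labeling_hierarchical].
Qed.
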